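(* Let $T$ be a topologically recurrent continuous linear operator on a real or complex Hausdorff topological vector space $X$ over $\mathbb{K}\in\{\mathbb{R},\mathbb{C}\}$, and let $\mathbb{T}=\{z\in\mathbb{C}:|z|=1\}$. Then: (a) for every $\lambda\in\mathbb{K}\setminus\mathbb{T}$ the operator $T-\lambda I$ has dense range; (b) if $X$ is real, then for every $\lambda\in\mathbb{C}\setminus\mathbb{T}$ the operator $\widetilde T-\lambda I$ has dense range in $\widetilde X$. Consequently, for every polynomial $p$ with coefficients in $\mathbb{K}$ having no roots in $\mathbb{T}$, the operator $p(T)$ has dense range in $X$.
   Context: $T$ is topologically recurrent if for every non-empty open $U\subset X$ there is $n\in\mathbb{N}$ with $T^n(U)\cap U\neq\varnothing$. For a real space $X$, its complexification is $\widetilde X=\{x+iy:x,y\in X\}$, topologically identified with $X\oplus X$, with complex scalar multiplication $(\alpha+i\beta)(x+iy)=(\alpha x-\beta y)+i(\alpha y+\beta x)$, and the complexified operator is $\widetilde T(x+iy)=Tx+iTy$. *)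

From HB Require Import structures.
From mathcomp Require Import all_boot all_order all_algebra.
From mathcomp Require Import all_classical all_reals all_analysis.
From mathcomp.real_closed Require Import complex.
Set Implicit Arguments. Unset Strict Implicit. Unset Printing Implicit Defensive.
Import Order.TTheory GRing.Theory Num.Theory.
Import numFieldTopology.Exports.
Local Open Scope classical_set_scope.
Local Open Scope ring_scope.

Definition topologically_recurrent (X : topologicalType) (T : X -> X) : Prop :=
  forall U : set X, open U -> U !=set0 ->
    exists n : nat, (0 < n)%N /\ ((iter n T) @` U) `&` U !=set0.

Definition dense_range (X Y : topologicalType) (f : X -> Y) : Prop :=
  closure (range f) = setT.

Definition shift_op (K : numDomainType) (X : lmodType K) (T : X -> X) (l : K)
  : X -> X := fun x => T x - l *: x.

Definition poly_op (K : numDomainType) (X : lmodType K) (p : {poly K})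
  (T : X -> X) : X -> X :=
  fun x => \sum_(i < size p) p`_i *: iter i T x.

(** Complexification of a real space X: ~X = X (+) X (x + iy ~ (x, y)),
    with the product topology; complex scalar multiplication
    (a + ib)(x + iy) = (ax - by) + i(ay + bx). *)
Definition cplx_scale (R : numDomainType) (X : lmodType R) (l : R[i]) (v : X * X)
  : X * X :=
  (complex.Re l *: v.1 - complex.Im l *: v.2, complex.Re l *: v.2 + complex.Im l *: v.1).

Definition cplx_op (X : Type) (T : X -> X) (v : X * X) : X * X :=
  (T v.1, T v.2).

Definition cplx_shift_op (R : numDomainType) (X : lmodType R) (T : X -> X)
  (l : R[i]) : X * X -> X * X :=
  fun v => cplx_op T v - cplx_scale l v.

From HB Require Import structures.
From mathcomp Require Import all_boot all_order all_algebra.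
From mathcomp Require Import all_classical all_reals all_analysis.
From mathcomp.real_closed Require Import complex.
From mathcomp Require Import ring lra.
Import Order.TTheory GRing.Theory Num.Theory.
Import numFieldTopology.Exports.
Local Open Scope classical_set_scope.
Local Open Scope ring_scope.

(* Write S = q(T) for a polynomial q, and let ev : K[X] -> F be a ring morphism
   into a valued field F with kernel (q), such that bounded elements of F are
   ev-images of polynomials of degree <= 1 with bounded coefficients (so that
   K[X]/(q) = F).  Modulo range S a vector A(T) z only depends on ev A.  The
   recurrence argument (recurrent_dense_range) shows that range S is dense as
   soon as |ev X| != 1: if u and T^n u are both close to x, a suitable
   combination a + L(T) (b - a) with {a, b} = {u, T^n u} lies in range S and is
   close to x.
   Part (a) is the instance q = X - l, F = K, ev = evaluation at l.  Over R, the
   instance q = (X - a)^2 + b^2, F = C, ev = evaluation at a + ib (b != 0)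
   shows that q(T) has dense range; part (b) follows because
   (~T - l)(~T - conj l) acts as q(T) on both coordinates of ~X = X (+) X.
   For the consequence, p(T) factors into shifts T - z (over C), while for real
   p, p(T)^2 is a product of the operators q(T) attached to the roots of p. *)

Section PolynomialCalculus.
Context {K : numDomainType} {X : lmodType K} (T : {linear X -> X}).

Lemma iter_linearP n a x y :
  iter n T (a *: x + y) = a *: iter n T x + iter n T y.
Proof. by elim: n => //= n ->; rewrite linearP. Qed.

Lemma poly_op_is_linear (p : {poly K}) : linear (poly_op p T).
Proof.
move=> a x y; rewrite /poly_op scaler_sumr -big_split; apply: eq_bigr => i _.
by rewrite iter_linearP scalerDr !scalerA mulrC.
Qed.

HB.instance Definition _ (p : {poly K}) :=
  GRing.isLinear.Build K X X *:%R (poly_op p T) (poly_op_is_linear p).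

Lemma poly_opE (p : {poly K}) n x : (size p <= n)%N ->
  poly_op p T x = \sum_(i < n) p`_i *: iter i T x.
Proof.
move=> hn; rewrite /poly_op -(subnKC hn) big_split_ord /=.
rewrite [X in _ + X]big1 ?addr0 // => i _.
by rewrite nth_default ?scale0r // leq_addr.
Qed.

Lemma poly_opD p q x : poly_op (p + q) T x = poly_op p T x + poly_op q T x.
Proof.
have [hp hq] := (leq_maxl (size p) (size q), leq_maxr (size p) (size q)).
rewrite !(@poly_opE _ (maxn (size p) (size q))) ?size_polyD // -big_split /=.
by apply: eq_bigr => i _; rewrite coefD scalerDl.
Qed.

Lemma poly_opZ c p x : poly_op (c *: p) T x = c *: poly_op p T x.
Proof.
rewrite (@poly_opE (c *: p) (size p)) ?size_scale_leq // /poly_op scaler_sumr.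
by apply: eq_bigr => i _; rewrite coefZ scalerA.
Qed.

Lemma poly_opB p q x : poly_op (p - q) T x = poly_op p T x - poly_op q T x.
Proof. by rewrite poly_opD -[- q]scaleN1r poly_opZ scaleN1r. Qed.

Lemma poly_opC c x : poly_op c%:P T x = c *: x.
Proof. by rewrite (@poly_opE _ 1) ?size_polyC ?leq_b1 // big_ord1 coefC. Qed.

Lemma poly_op1 x : poly_op 1 T x = x.
Proof. by rewrite -polyC1 poly_opC scale1r. Qed.

Lemma poly_opMX p x : poly_op (p * 'X) T x = poly_op p T (T x).
Proof.
have [->|p0] := eqVneq p 0; first by rewrite mul0r /poly_op size_poly0 !big_ord0.
rewrite /poly_op size_mulX // big_ord_recl coefMX /= scale0r add0r.
by apply: eq_bigr => i _; rewrite coefMX /= -iterSr.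
Qed.

Lemma poly_op_comm p x : T (poly_op p T x) = poly_op p T (T x).
Proof.
rewrite /poly_op linear_sum; apply: eq_bigr => i _.
by rewrite linearZ /= -iterS iterSr.
Qed.

Lemma poly_opM p q x : poly_op (p * q) T x = poly_op p T (poly_op q T x).
Proof.
elim/poly_ind: p q x => [|p c IH] q x.
  by rewrite mul0r /poly_op size_poly0 !big_ord0.
rewrite mulrDl poly_opD -mulrA (mulrC 'X) IH poly_opMX poly_opD poly_opMX.
by rewrite -poly_op_comm mul_polyC poly_opZ poly_opC.
Qed.

Lemma poly_opXn n x : poly_op 'X^n T x = iter n T x.
Proof.
elim: n x => [|n IH] x; first by rewrite expr0 poly_op1.
by rewrite exprSr poly_opMX IH iterSr.
Qed.

Lemma shift_opE l : shift_op T l = poly_op ('X - l%:P) T.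
Proof.
apply: funext => x; rewrite poly_opB poly_opC.
by have := poly_opXn 1 x; rewrite expr1 => ->.
Qed.

Lemma poly_op_affine (p : {poly K}) x : (size p <= 2)%N ->
  poly_op p T x = p`_0 *: x + p`_1 *: T x.
Proof. by move=> h; rewrite (@poly_opE p 2 x h) !big_ord_recl big_ord0 addr0. Qed.

End PolynomialCalculus.

Section TopologicalVectorSpace.
Context {K : numFieldType} {X : topologicalLmodType K}.

Lemma nbhs0_binop {op : X -> X -> X} {N : set X} :
  continuous (fun z : X * X => op z.1 z.2) -> op 0 0 = 0 -> nbhs 0 N ->
  exists2 V : set X, nbhs 0 V & forall a b, V a -> V b -> N (op a b).
Proof.
move=> op_cont op00 N0; have := op_cont (0, 0); rewrite /continuous_at /= op00.
move=> /(_ _ N0) [[A B] /= [A0 B0] AB_N].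
exists (A `&` B); first exact: filterI.
by move=> a b [Aa _] [_ Bb]; exact: (AB_N (a, b)).
Qed.

Lemma nbhs_translate (a y : X) (N : set X) :
  nbhs (y + a) N -> nbhs y [set z | N (z + a)].
Proof.
move=> Nya; have := @add_continuous X (y, a); rewrite /continuous_at /=.
move=> /(_ _ Nya) [[A B] /= [Ay Ba] AB_N].
by apply: filterS Ay => z Az; exact: (AB_N (z, a)) (conj Az (nbhs_singleton Ba)).
Qed.

Lemma scale_continuous_at (k : K) : continuous (fun w : X => k *: w).
Proof.
move=> x N Nkx; have := @scale_continuous K X (k, x); rewrite /continuous_at /=.
move=> /(_ _ Nkx) [[A B] /= [Ak Bx] AB_N].
by apply: filterS Bx => y By; exact: (AB_N (k, y)) (conj (nbhs_singleton Ak) By).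
Qed.

Lemma add_continuous_fun (f g : X -> X) : continuous f -> continuous g ->
  continuous (fun x => f x + g x).
Proof.
move=> f_cont g_cont x N Nfg; have := @add_continuous X (f x, g x).
rewrite /continuous_at /= => /(_ _ Nfg) [[A B] /= [Afx Bgx] AB_N].
have : nbhs x (f @^-1` A `&` g @^-1` B) by apply: filterI; [exact: f_cont|exact: g_cont].
by apply: filterS => z [Az Bz]; exact: (AB_N (f z, g z)).
Qed.

Lemma scale_bounded_small (N : set X) (C : K) : nbhs 0 N ->
  exists2 W : set X, nbhs 0 W & forall c w, `|c| <= C -> W w -> N (c *: w).
Proof.
move=> N0; have := @scale_continuous K X (0, 0); rewrite /continuous_at /= scaler0.
move=> /(_ _ N0) [[A B] /= [/nbhs_ballP [e /= e_gt0 eA] B0] AB_N].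
pose k := (`|C| + 1) / e * 2.
have k_gt0 : 0 < k by rewrite !mulr_gt0 // ?invr_gt0 // ltr_wpDl.
exists ((fun w => k *: w) @^-1` B).
  by have := scale_continuous_at k 0; rewrite /continuous_at scaler0; apply.
move=> c w cC Bkw.
have -> : c *: w = (c / k) *: (k *: w) by rewrite scalerA mulrVK // unitfE gt_eqF.
apply: (AB_N (c / k, k *: w)); split => //=; apply: eA.
rewrite /ball /= sub0r normrN normrM normfV (gtr0_norm k_gt0) ltr_pdivrMr //.
rewrite /k mulrA mulrCA divff ?gt_eqF // mulr1.
have C_ge0 : 0 <= C := le_trans (normr_ge0 _) cC.
rewrite (ger0_norm C_ge0); apply: (le_lt_trans cC).
by rewrite mulrDl mul1r mulr_natr mulr2n -addrA ltr_pwDr // ltr_wpDl.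
Qed.

Section Operator.
Variable T : {linear X -> X}.
Hypothesis T_cont : continuous T.

Lemma poly_op_continuous (p : {poly K}) : continuous (poly_op p T).
Proof.
elim/poly_ind: p => [|p c IH].
  rewrite (_ : poly_op 0 T = fun=> 0); first exact: cst_continuous.
  by apply: funext => x; rewrite /poly_op size_poly0 big_ord0.
rewrite (_ : poly_op _ T = fun x => poly_op p T (T x) + c *: x).
  apply: add_continuous_fun; last exact: scale_continuous_at.
  by move=> x; apply: continuous_comp; [exact: T_cont|exact: IH].
by apply: funext => x; rewrite poly_opD poly_opMX poly_opC.
Qed.

Lemma affine_poly_op_small (N : set X) (C : K) : nbhs 0 N ->
  exists2 W : set X, nbhs 0 W & forall (L : {poly K}) w,
    (size L <= 2)%N -> (forall i, `|L`_i| <= C) -> W w -> N (poly_op L T w).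
Proof.
move=> N0; have [N1 N1_0 N1N] := nbhs0_binop (@add_continuous X) (addr0 0) N0.
have [W W0 WN1] := scale_bounded_small N1 C N1_0.
have TW0 : nbhs 0 (T @^-1` W).
  by have := T_cont 0; rewrite /continuous_at linear0; apply.
exists (W `&` T @^-1` W); first exact: filterI.
by move=> L w L2 LC [Ww TWw]; rewrite poly_op_affine //; apply: N1N; apply: WN1.
Qed.

End Operator.
End TopologicalVectorSpace.

Section DenseRange.
Context {X Y Z : topologicalType}.

Lemma dense_range_sub {f g : X -> Y} :
  range g `<=` range f -> dense_range g -> dense_range f.
Proof.
move=> gf g_dense; apply/seteqP; split => // y _.
by apply: (closureS gf); rewrite g_dense.
Qed.

Lemma surjective_dense_range (f : X -> Y) :
  (forall y, exists x, f x = y) -> dense_range f.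
Proof.
move=> f_surj; apply/seteqP; split => // y _ B By.
by have [x fx] := f_surj y; exists y; split; [exists x|exact: nbhs_singleton].
Qed.

Lemma dense_range_comp (f : Y -> Z) (g : X -> Y) : continuous f ->
  dense_range f -> dense_range g -> dense_range (f \o g).
Proof.
move=> f_cont f_dense g_dense; apply/seteqP; split => // z _ B Bz.
have : closure (range f) z by rewrite f_dense.
move=> /(_ _ (nbhs_interior Bz)) [_ [[y _ <-] fyB]].
have : closure (range g) y by rewrite g_dense.
move=> /(_ _ (f_cont y _ fyB)) [_ [[x _ <-] gxB]].
by exists (f (g x)); split => //; exists x.
Qed.

Lemma dense_range_pair {f g : X -> Y} :
  dense_range f -> dense_range g -> dense_range (fun v : X * X => (f v.1, g v.2)).
Proof.
move=> f_dense g_dense; apply/seteqP; split => // -[y1 y2] _ B.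
move=> [[A1 A2] /= [A1y A2y] AB].
have : closure (range f) y1 by rewrite f_dense.
move=> /(_ _ A1y) [_ [[x1 _ <-] A1f]].
have : closure (range g) y2 by rewrite g_dense.
move=> /(_ _ A2y) [_ [[x2 _ <-] A2g]].
by exists (f x1, g x2); split; [exists (x1, x2)|exact: (AB (f x1, g x2))].
Qed.

End DenseRange.

Section DensePolynomial.
Context {K : numFieldType} {X : topologicalLmodType K} (T : {linear X -> X}).
Hypothesis T_cont : continuous T.

Lemma dense_range_prod (I : eqType) (s : seq I) (f : I -> {poly K}) :
  (forall i, i \in s -> dense_range (poly_op (f i) T)) ->
  dense_range (poly_op (\prod_(i <- s) f i) T).
Proof.
elim: s => [|i s IH] s_dense.
  by rewrite big_nil; apply: surjective_dense_range => y; exists y; rewrite poly_op1.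
rewrite big_cons (_ : poly_op _ T = poly_op (f i) T \o poly_op (\prod_(j <- s) f j) T).
  apply: dense_range_comp; first exact: poly_op_continuous.
    by apply: s_dense; rewrite inE eqxx.
  by apply: IH => j js; apply: s_dense; rewrite inE js orbT.
by apply: funext => x; rewrite /= poly_opM.
Qed.

Lemma dense_range_scale (c : K) (p : {poly K}) : c != 0 ->
  dense_range (poly_op p T) -> dense_range (poly_op (c *: p) T).
Proof.
move=> c0 p_dense.
rewrite (_ : poly_op _ T = (fun x => c *: x) \o poly_op p T).
  apply: dense_range_comp => //; first exact: scale_continuous_at.
  apply: surjective_dense_range => y; exists (c^-1 *: y).
  by rewrite scalerA divff // scale1r.
by apply: funext => x; rewrite /= poly_opZ.
Qed.

End DensePolynomial.

Section RecurrenceArgument.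
Context {K : numFieldType} {X : topologicalLmodType K} (T : {linear X -> X}).
Hypotheses (T_cont : continuous T) (T_rec : topologically_recurrent T).
Variables (q : {poly K}) (F : numFieldType) (ev : {rmorphism {poly K} -> F}).

(* ev identifies K[X]/(q) with a subring of F ... *)
Hypothesis ev_ker : forall P, ev P = 0 -> q %| P.
(* ... which is all of F, every bounded element of F being represented by a
   polynomial of degree at most one with bounded coefficients. *)
Hypothesis ev_bounded_rep : forall M : F, exists C : K, forall nu : F,
  `|nu| <= M -> exists L : {poly K},
    [/\ (size L <= 2)%N, ev L = nu & forall i, `|L`_i| <= C].

Local Notation S := (poly_op q T).

Lemma range_congr (A B : {poly K}) z :
  ev A = ev B -> range S (poly_op A T z - poly_op B T z).
Proof.
move=> AB; have /dvdpP [P ABq] : q %| A - B by apply: ev_ker; rewrite rmorphB AB subrr.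
by exists (poly_op P T z) => //; rewrite -poly_opM -poly_opB ABq mulrC.
Qed.

Lemma range_poly_op (P : {poly K}) {y : X} : range S y -> range S (poly_op P T y).
Proof. by move=> [z _ <-]; exists (poly_op P T z) => //; rewrite -!poly_opM mulrC. Qed.

(* If P(T) a = b modulo range S, then a + L(T) (b - a) lies in range S as soon
   as ev L inverts 1 - ev P: indeed it equals (1 - L (1 - P))(T) a plus
   L(T) (b - P(T) a). *)
Lemma range_combination (P L : {poly K}) a b :
  range S (b - poly_op P T a) -> ev L * (1 - ev P) = 1 ->
  range S (a + poly_op L T (b - a)).
Proof.
move=> Pab evL.
have [y1 _ Sy1] : range S (poly_op 1 T a - poly_op (L * (1 - P)) T a).
  by apply: range_congr; rewrite rmorphM rmorphB rmorph1 evL.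
have [y2 _ Sy2] := range_poly_op L Pab.
exists (y1 + y2) => //; rewrite linearD /= Sy1 Sy2 poly_opM poly_opB !poly_op1 !linearB /=.
by rewrite opprK -addrA; congr (_ + _); rewrite addrCA addrK.
Qed.

(* Put rho = ev X or its inverse, whichever has modulus < 1.  For every n and
   u there is P with ev P = rho ^ n such that P(T) a = b modulo range S, where
   (a, b) is (u, T^n u) or (T^n u, u). *)
Lemma contracting_power : `|ev 'X| != 1 -> exists2 rho : F, `|rho| < 1 &
  forall n (u : X), exists P a b, [/\ ev P = rho ^+ n,
    range S (b - poly_op P T a) &
    (a, b) = (u, iter n T u) \/ (a, b) = (iter n T u, u)].
Proof.
move=> evX1; have : (`|ev 'X| < 1) || (1 < `|ev 'X|).
  by rewrite -real_neqr_lt ?realE ?normr_ge0 ?ler01.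
case/orP => [evX_lt1|evX_gt1].
  exists (ev 'X) => // n u; exists 'X^n, u, (iter n T u); split; last by left.
  - exact: rmorphXn.
  - by rewrite poly_opXn subrr; exists 0; rewrite ?linear0.
have evX0 : ev 'X != 0 by rewrite -normr_gt0 (lt_trans ltr01).
exists (ev 'X)^-1; first by rewrite normfV invf_lt1 // (lt_trans ltr01).
move=> n u; have [C rep] := ev_bounded_rep `|(ev 'X)^-1 ^+ n|.
have [L [_ evL _]] := rep _ (lexx _).
exists L, (iter n T u), u; split => //; last by right.
have := range_congr 1 (L * 'X^n) u; rewrite poly_op1 poly_opM poly_opXn; apply.
by rewrite rmorph1 rmorphM evL rmorphXn -exprMn mulVf // expr1n.
Qed.

(* Given x and a neighbourhood N of x, recurrence provides u with u and T^n u
   close to x; with P as in contracting_power and ev L = (1 - ev P)^-1, whose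
   modulus is at most (1 - |rho|)^-1 uniformly in n, the vector
   a + L(T) (b - a) of range S is close to x. *)
Lemma recurrent_dense_range : `|ev 'X| != 1 -> dense_range S.
Proof.
move=> evX1; have [rho rho_lt1 contract] := contracting_power evX1.
have [C rep] := ev_bounded_rep (1 - `|rho|)^-1.
apply/seteqP; split => // x _ N Nx.
have N0 : nbhs 0 [set d | N (d + x)] by apply: nbhs_translate; rewrite add0r.
have [N1 N1_0 N1N] := nbhs0_binop (@add_continuous X) (addr0 0) N0.
have [W W0 WN1] := affine_poly_op_small _ T_cont N1 C N1_0.
have [V V0 VW] := @nbhs0_binop _ _ (fun a b => a - b) _ (@sub_continuous X) (subrr 0) W0.
pose U := [set z | (V `&` N1) (z - x)].
have Ux : nbhs x U by apply: nbhs_translate; rewrite subrr; exact: filterI.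
have [n [n_gt0 [_ [[u Uu <-] Unu]]]] :=
  T_rec U° (@open_interior _ U) (ex_intro _ x (nbhs_singleton (nbhs_interior Ux))).
have [P [a [b [evP Pab ab]]]] := contract n u.
have [Uu' Unu'] : U u /\ U (iter n T u) by split; apply: interior_subset.
have [[Va N1a] Vb] : U a /\ V (b - x).
  by case: ab => -[-> ->]; split => //; [case: Unu'|case: Uu'].
have rho_gap : 0 < 1 - `|rho| by rewrite subr_gt0.
have evP_le : `|ev P| <= `|rho|.
  rewrite evP normrX -(prednK n_gt0) exprS -[leRHS]mulr1.
  by rewrite ler_wpM2l // exprn_ile1 // ltW.
have evP_far : 1 - `|rho| <= `|1 - ev P|.
  by apply: le_trans (lerB_dist 1 (ev P)); rewrite normr1 lerB.
have evP1 : 1 - ev P != 0 by rewrite -normr_gt0 (lt_le_trans rho_gap).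
have [L [L2 evL LC]] : exists L : {poly K}, [/\ (size L <= 2)%N,
    ev L = (1 - ev P)^-1 & forall i, `|L`_i| <= C].
  by apply: rep; rewrite normfV lef_pV2 ?posrE ?normr_gt0.
exists (a + poly_op L T (b - a)); split.
  by apply: range_combination Pab _; rewrite evL mulVf.
have -> : a + poly_op L T (b - a) = a - x + poly_op L T (b - x - (a - x)) + x.
  by rewrite opprB addrA subrK addrAC subrK.
by apply: N1N => //; apply: WN1 => //; exact: VW.
Qed.

End RecurrenceArgument.

(* Part (a): K[X]/(X - l) is identified with K by evaluation at l. *)
Lemma shift_dense_range {K : numFieldType} {X : topologicalLmodType K}
    (T : {linear X -> X}) (l : K) :
  continuous T -> topologically_recurrent T -> `|l| != 1 ->
  dense_range (shift_op T l).
Proof.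
move=> T_cont T_rec l1; rewrite shift_opE.
apply: (@recurrent_dense_range _ _ T T_cont T_rec _ _ (horner_eval l)).
- by move=> P /polyXsubCP.
- move=> M; exists M => nu nuM; exists nu%:P; split.
  + by rewrite size_polyC; case: (nu != 0).
  + by rewrite /= horner_evalE hornerC.
  + by move=> i; rewrite coefC; case: eqP => // _; rewrite normr0 (le_trans _ nuM).
- by rewrite /= horner_evalE hornerX.
Qed.

Lemma real_complex_comm {R : rcfType} (z : R[i]) : commr_rmorph (real_complex R) z.
Proof. by move=> c; exact: mulrC. Qed.

Notation evC z := (horner_morph (real_complex_comm z)).

Section ConjugatePair.
Context {R : rcfType}.
Implicit Types (a b : R) (z : R[i]).

(* (X - a)^2 + b^2, the real polynomial whose complex roots are a + ib, a - ib. *)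
Definition conj_pair_poly a b : {poly R} := ('X - a%:P) ^+ 2 + (b ^+ 2)%:P.

Lemma evC_affine z (c0 c1 : R) :
  evC z (c0%:P + c1%:P * 'X) = ((c0 + c1 * complex.Re z) +i* (c1 * complex.Im z))%C.
Proof.
rewrite rmorphD rmorphM /= !horner_morphC horner_morphX.
by case: z => a b; simpc.
Qed.

Lemma evC_conj_pair a b : evC (a +i* b)%C (conj_pair_poly a b) = 0.
Proof.
rewrite rmorphD rmorphXn rmorphB /= !horner_morphC horner_morphX.
by simpc; rewrite expr2 addNr.
Qed.

Lemma size_conj_pair_poly a b : size (conj_pair_poly a b) = 3%N.
Proof.
rewrite /conj_pair_poly size_polyDl ?size_exp_XsubC //.
by rewrite size_polyC; case: (_ != 0).
Qed.

Lemma affine_polyE (r : {poly R}) : (size r <= 2)%N ->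
  r = (r`_0)%:P + (r`_1)%:P * 'X.
Proof.
move=> r2; apply/polyP => i; rewrite coefD coefCM coefC coefX.
case: i => [|[|i]] /=; rewrite ?mulr0 ?mulr1 ?addr0 ?add0r //.
by rewrite nth_default // (leq_trans r2).
Qed.

Lemma size_affine_poly (c0 c1 : R) : (size (c0%:P + c1%:P * 'X)%R <= 2)%N.
Proof.
apply: (leq_trans (size_polyD _ _)); rewrite geq_max size_polyC.
rewrite mul_polyC (leq_trans (size_scale_leq _ _)) ?size_polyX ?andbT //.
by case: (c0 != 0).
Qed.

Lemma coef_affine_poly (c0 c1 : R) i : (c0%:P + c1%:P * 'X)`_i =
  if i == 0%N then c0 else if i == 1%N then c1 else 0.
Proof.
by rewrite coefD coefCM coefC coefX; case: i => [|[|i]] /=;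
  rewrite ?mulr0 ?mulr1 ?addr0 ?add0r.
Qed.

Lemma complex_parts_le z (M : R[i]) : `|z| <= M ->
  `|complex.Re z| <= complex.Re M /\ `|complex.Im z| <= complex.Re M.
Proof.
case: z => c d; rewrite normc_def lecE /= => /andP [_ cdM].
by split; apply: le_trans cdM;
  rewrite -sqrtr_sqr ler_sqrt ?addr_ge0 ?sqr_ge0 // (lerDl, lerDr) sqr_ge0.
Qed.

Section NonReal.
Variables (a b : R).
Hypothesis b0 : b != 0.

Lemma evC_ker P : evC (a +i* b)%C P = 0 -> conj_pair_poly a b %| P.
Proof.
move=> P0; apply/modp_eq0P; set r := P %% _.
have r2 : (size r <= 2)%N.
  by rewrite -ltnS -(size_conj_pair_poly a b) ltn_modp -size_poly_eq0 size_conj_pair_poly.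
have : evC (a +i* b)%C r = 0.
  have -> : r = P - P %/ conj_pair_poly a b * conj_pair_poly a b.
    by rewrite [P in P - _](divp_eq P (conj_pair_poly a b)) addrAC subrr add0r.
  by rewrite rmorphB rmorphM /= (evC_conj_pair a b) mulr0 subr0 P0.
rewrite [r in evC _ r](affine_polyE _ r2) evC_affine /= => /eqP.
rewrite eq_complex /= mulf_eq0 (negbTE b0) orbF => /andP [/eqP r0 /eqP r1].
rewrite r1 mul0r addr0 in r0.
by rewrite (affine_polyE _ r2) r0 r1 mul0r addr0.
Qed.

(* Explicitly, c + id = evC ((c - d a / b) + (d / b) X). *)
Lemma evC_bounded_rep (M : R[i]) : exists C : R, forall nu : R[i],
  `|nu| <= M -> exists L : {poly R}, [/\ (size L <= 2)%N,
    evC (a +i* b)%C L = nu & forall i, `|L`_i| <= C].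
Proof.
exists (complex.Re M * (1 + (1 + `|a|) / `|b|)) => -[c d] /complex_parts_le /= [cM dM].
have M_ge0 : 0 <= complex.Re M := le_trans (normr_ge0 _) cM.
have b_gt0 : 0 < `|b| by rewrite normr_gt0.
exists ((c - d / b * a)%:P + (d / b)%:P * 'X); split.
- exact: size_affine_poly.
- by rewrite evC_affine /= subrK divfK.
- move=> i; rewrite coef_affine_poly; set m := complex.Re M; pose k := m / `|b|.
  have k_ge0 : 0 <= k by rewrite divr_ge0 // ltW.
  have kb_ge0 : 0 <= k * `|a| by rewrite mulr_ge0.
  have dbk : `|d / b| <= k by rewrite normrM normfV ler_wpM2r // invr_ge0 ltW.
  have -> : m * (1 + (1 + `|a|) / `|b|) = m + k + k * `|a|.
    by rewrite /k; ring.
  case: ifP => _.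
    apply: (le_trans (ler_normB _ _)); rewrite normrM.
    have := ler_wpM2r (normr_ge0 a) dbk; lra.
  by case: ifP => _; rewrite ?normr0; lra.
Qed.

End NonReal.
End ConjugatePair.

Section RealOperator.
Context {R : rcfType} {X : topologicalLmodType R} (T : {linear X -> X}).
Hypotheses (T_cont : continuous T) (T_rec : topologically_recurrent T).

Lemma conj_pair_polyE a b x :
  poly_op (conj_pair_poly a b) T x = shift_op T a (shift_op T a x) + b ^+ 2 *: x.
Proof. by rewrite shift_opE poly_opD poly_opC expr2 poly_opM. Qed.

(* For a complex l off the unit circle, the real operator
   (T - Re l)^2 + (Im l)^2 has dense range: for Im l != 0 by the recurrence
   argument with K[X]/(q) = C, and for real l by part (a), applied twice. *)
Lemma conj_pair_dense_range (l : R[i]) : `|l| != 1 ->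
  dense_range (poly_op (conj_pair_poly (complex.Re l) (complex.Im l)) T).
Proof.
case: l => a b /= l1; have [b0|b0] := eqVneq b 0.
  have a1 : `|a| != 1.
    by apply: contra l1 => /eqP a1; rewrite normc_def b0 /= expr0n addr0 sqrtr_sqr a1.
  have Sa_dense : dense_range (shift_op T a) by exact: shift_dense_range.
  rewrite (_ : poly_op _ T = shift_op T a \o shift_op T a).
    by apply: dense_range_comp => //; rewrite shift_opE; exact: poly_op_continuous.
  by apply: funext => x; rewrite /= conj_pair_polyE b0 expr0n scale0r addr0.
apply: (@recurrent_dense_range _ _ T T_cont T_rec _ _ (evC (a +i* b)%C)).
- exact: evC_ker.
- exact: evC_bounded_rep.
- by rewrite /= horner_morphX.
Qed.

Lemma cplx_shift_opE a b (v : X * X) : cplx_shift_op T (a +i* b)%C v =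
  (shift_op T a v.1 + b *: v.2, shift_op T a v.2 - b *: v.1).
Proof.
rewrite /cplx_shift_op /cplx_op /cplx_scale /shift_op /=.
by congr (_, _); rewrite /= ?opprD ?opprB ?addrA ?opprK.
Qed.

Lemma cplx_shift_op_conj a b (v : X * X) :
  cplx_shift_op T (a +i* b)%C (cplx_shift_op T (a -i* b)%C v) =
  (poly_op (conj_pair_poly a b) T v.1, poly_op (conj_pair_poly a b) T v.2).
Proof.
rewrite !cplx_shift_opE /= !conj_pair_polyE !shift_opE.
rewrite !(linearD, linearB, linearZ, linearN) /=.
by rewrite !(scaleNr, scalerN, scalerDr, opprK, scalerA, mulrN) -expr2 -!addrA addKr addNKr.
Qed.

(* Part (b): as q(T) (+) q(T) = (~T - l)(~T - conj l), the range of ~T - l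
   contains the dense range of q(T) (+) q(T). *)
Lemma cplx_shift_dense_range (l : R[i]) : `|l| != 1 ->
  dense_range (cplx_shift_op T l).
Proof.
case: l => a b l1; have /= q_dense := conj_pair_dense_range _ l1.
apply: (dense_range_sub _ (dense_range_pair q_dense q_dense)).
by move=> _ [v _ <-]; exists (cplx_shift_op T (a -i* b)%C v); rewrite ?cplx_shift_op_conj.
Qed.

End RealOperator.

Lemma factors_off_circle {C : numClosedFieldType} {c : C} {r : seq C} :
  c != 0 -> (forall z, `|z| = 1 -> ~~ root (c *: \prod_(z <- r) ('X - z%:P)) z) ->
  forall z, z \in r -> `|z| != 1.
Proof.
move=> c0 off_circle z zr; apply/eqP => z1.
by have := off_circle z z1; rewrite rootZ // root_prod_XsubC zr.
Qed.

(* Consequence over C: p(T) is a product of shifts T - z, |z| != 1. *)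
Lemma complex_poly_dense_range {R : rcfType} {X : topologicalLmodType R[i]}
    (T : {linear X -> X}) (p : {poly R[i]}) :
  continuous T -> topologically_recurrent T ->
  (forall z : R[i], `|z| = 1 -> ~~ root p z) -> dense_range (poly_op p T).
Proof.
move=> T_cont T_rec off_circle.
have p0 : p != 0 by apply: contraTneq (off_circle 1 (normr1 _)) => ->; rewrite root0.
have [r p_eq] := closed_field_poly_normal p; rewrite p_eq in off_circle *.
have lc0 : lead_coef p != 0 by rewrite lead_coef_eq0.
apply: dense_range_scale => //; apply: dense_range_prod => // z zr.
rewrite -shift_opE; apply: shift_dense_range => //.
exact: factors_off_circle lc0 off_circle z zr.
Qed.

Section RealPolynomial.
Context {R : rcfType}.

Lemma map_conj_pair_poly (z : R[i]) :
  map_poly (real_complex R) (conj_pair_poly (complex.Re z) (complex.Im z)) =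
  ('X - z%:P) * ('X - (z^*)%C%:P).
Proof.
case: z => a b /=; rewrite rmorphD rmorphXn rmorphB /= map_polyX !map_polyC /=.
have -> : (a +i* b = a%:C + 'i * b%:C)%C by simpc.
have -> : (a -i* b = a%:C - 'i * b%:C)%C by simpc.
rewrite !rmorphXn /= !polyCD polyCN !polyCM.
have i2 : ('i%C%:P : {poly R[i]}) ^+ 2 = -1 by rewrite -polyC_exp sqr_i polyCN polyC1.
transitivity (('X - (a%:C)%C%:P) ^+ 2 - ('i%C%:P) ^+ 2 * ((b%:C)%C%:P) ^+ 2); last by ring.
by rewrite i2; ring.
Qed.

(* If p is real, the complex roots of p come in conjugate pairs, so p^2 is,
   up to a constant, the product of the real quadratics (X - Re z)^2 + Im z^2
   over the complex roots z of p. *)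
Lemma real_poly_square (p : {poly R}) (r : seq R[i]) : p != 0 ->
  map_poly (real_complex R) p = ((lead_coef p)%:C)%C *: \prod_(z <- r) ('X - z%:P) ->
  p * p = lead_coef p ^+ 2 *:
    \prod_(z <- r) conj_pair_poly (complex.Re z) (complex.Im z).
Proof.
move=> p0 p_eq; set P0 := \prod_(z <- r) _ in p_eq.
have lc0 : ((lead_coef p)%:C)%C != 0.
  by rewrite -lead_coef_map lead_coef_eq0 map_poly_eq0.
have P0_real : map_poly conjc P0 = P0.
  have : map_poly conjc (map_poly (real_complex R) p) = map_poly (real_complex R) p.
    by rewrite -map_poly_comp; apply: eq_map_poly => x /=; exact: conjc_real.
  by rewrite p_eq map_polyZ /= oppr0 => /(scalerI lc0).
apply: (@map_poly_inj _ _ (real_complex R)).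
rewrite rmorphM map_polyZ /= p_eq rmorph_prod /= rmorphXn /=.
under eq_bigr => z _ do rewrite map_conj_pair_poly.
rewrite big_split /= -scalerAl -scalerAr scalerA -expr2; congr (_ *: (_ * _)).
by rewrite -[LHS]P0_real rmorph_prod; apply: eq_bigr => z _; rewrite /= map_polyXsubC.
Qed.

End RealPolynomial.

(* Consequence over R: p(T)^2 = c q_1(T) ... q_k(T) with the real quadratics
   attached to the complex roots of p, each of which has dense range. *)
Lemma real_poly_dense_range {R : rcfType} {X : topologicalLmodType R}
    (T : {linear X -> X}) (p : {poly R}) :
  continuous T -> topologically_recurrent T ->
  (forall z : R[i], `|z| = 1 ->
     ~~ root (map_poly (fun r : R => (r%:C)%C) p) z) ->
  dense_range (poly_op p T).
Proof.
move=> T_cont T_rec off_circle.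
have p0 : p != 0.
  by apply: contraTneq (off_circle 1 (normr1 _)) => ->; rewrite map_poly0 root0.
have [r pC_eq] := closed_field_poly_normal (map_poly (real_complex R) p).
rewrite lead_coef_map /= in pC_eq.
apply: (dense_range_sub (g := poly_op (p * p) T)).
  by move=> _ [x _ <-]; exists (poly_op p T x); rewrite ?poly_opM.
rewrite (real_poly_square _ _ p0 pC_eq); apply: dense_range_scale.
  by rewrite expf_neq0 // lead_coef_eq0.
apply: dense_range_prod => // z zr; apply: conj_pair_dense_range => //.
have lc0 : ((lead_coef p)%:C)%C != 0.
  by rewrite -lead_coef_map lead_coef_eq0 map_poly_eq0.
apply: (factors_off_circle lc0 _ z zr) => w w1.
by rewrite -pC_eq; exact: off_circle.
Qed.

Theorem mainTheorem6 (R : realType) :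
  (* K = R : real Hausdorff topological vector spaces *)
  (forall (X : topologicalLmodType R) (T : {linear X -> X}),
     hausdorff_space X -> continuous T -> topologically_recurrent T ->
     [/\ (* (a) *)
         (forall l : R, `|l| != 1 -> dense_range (shift_op T l)),
         (* (b) *)
         (forall l : R[i], `|l| != 1 -> dense_range (cplx_shift_op T l))
       & (* consequence *)
         (forall p : {poly R},
            (forall z : R[i], `|z| = 1 ->
               ~~ root (map_poly (fun r : R => (r%:C)%C) p) z) ->
            dense_range (poly_op p T))]) /\
  (* K = C : complex Hausdorff topological vector spaces *)
  (forall (X : topologicalLmodType R[i]) (T : {linear X -> X}),
     hausdorff_space X -> continuous T -> topologically_recurrent T ->
     (forall l : R[i], `|l| != 1 -> dense_range (shift_op T l)) /\
     (forall p : {poly R[i]},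
        (forall z : R[i], `|z| = 1 -> ~~ root p z) ->
        dense_range (poly_op p T))).
Proof.
split=> X T _ T_cont T_rec; split.
- by move=> l; exact: shift_dense_range.
- by move=> l; exact: cplx_shift_dense_range.
- by move=> p; exact: real_poly_dense_range.
- by move=> l; exact: shift_dense_range.
- by move=> p; exact: complex_poly_dense_range.
Qed.
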